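(* If a space $X$ has a dense subset which (as a subspace) satisfies ${\sf S}_1(\mathcal{G}_K,\mathcal{G}_\Gamma)$, then $X$ satisfies ${\sf S}_1(\mathcal{G}_K,\mathcal{G}_{D_\Gamma})$.
   Context: All spaces are infinite ${\sf T}_1$ topological spaces. For a space $Z$: $\mathcal{G}_K$ is the family of all collections $\mathcal{U}$ of ${\sf G}_\delta$ subsets of $Z$ with $Z\notin\mathcal{U}$ such that each compact subset of $Z$ is contained in some member of $\mathcal{U}$; $\mathcal{G}_\Gamma$ is the family of infinite collections of ${\sf G}_\delta$ subsets of $Z$ every infinite subcollection of which covers $Z$; $\mathcal{G}_{D_\Gamma}$ is the family of infinite collections $\mathcal{U}$ of ${\sf G}_\delta$ subsets of $Z$ such that for each nonempty open $U\subseteq Z$, the set $\{V\in\mathcal{U}: U\cap V=\emptyset\}$ is finite. ${\sf S}_1(\mathcal{A},\mathcal{B})$: for each sequence $(A_n)$ of elements of $\mathcal{A}$ there are $B_n\in A_n$ with $\{B_n:n\in\mathbb{N}\}\in\mathcal{B}$. *)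

From Stdlib Require Import List.

Section Topology.
Variable T : Type.

Definition is_topology (op : (T -> Prop) -> Prop) : Prop :=
  op (fun _ => True) /\
  (forall U V, op U -> op V -> op (fun x => U x /\ V x)) /\
  (forall F : (T -> Prop) -> Prop, (forall U, F U -> op U) ->
     op (fun x => exists U, F U /\ U x)).

Definition T1 (op : (T -> Prop) -> Prop) : Prop :=
  forall x y : T, x <> y -> exists U, op U /\ U x /\ ~ U y.

Definition infinite_type : Prop := ~ exists l : list T, forall x : T, In x l.

Definition dense (op : (T -> Prop) -> Prop) (D : T -> Prop) : Prop :=
  forall U, op U -> (exists x, U x) -> exists x, U x /\ D x.

Definition Gdelta (op : (T -> Prop) -> Prop) (A : T -> Prop) : Prop :=
  exists W : nat -> T -> Prop, (forall n, op (W n)) /\ (forall x, A x <-> forall n, W n x).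

Definition compact (op : (T -> Prop) -> Prop) (K : T -> Prop) : Prop :=
  forall F : (T -> Prop) -> Prop, (forall U, F U -> op U) ->
    (forall x, K x -> exists U, F U /\ U x) ->
    exists l : list (T -> Prop), (forall U, In U l -> F U) /\
      (forall x, K x -> exists U, In U l /\ U x).

Definition coll := (T -> Prop) -> Prop.

Definition finite_coll (C : coll) : Prop :=
  exists l : list (T -> Prop), forall V, C V -> exists W, In W l /\ (forall x, V x <-> W x).

Definition GK (op : (T -> Prop) -> Prop) (C : coll) : Prop :=
  (forall V, C V -> Gdelta op V) /\
  ~ (exists V, C V /\ forall x, V x) /\
  (forall K, compact op K -> exists V, C V /\ forall x, K x -> V x).

Definition GGamma (op : (T -> Prop) -> Prop) (C : coll) : Prop :=
  (forall V, C V -> Gdelta op V) /\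
  ~ finite_coll C /\
  (forall C' : coll, (forall V, C' V -> C V) -> ~ finite_coll C' ->
     forall x, exists V, C' V /\ V x).

Definition GDGamma (op : (T -> Prop) -> Prop) (C : coll) : Prop :=
  (forall V, C V -> Gdelta op V) /\
  ~ finite_coll C /\
  (forall U, op U -> (exists x, U x) ->
     finite_coll (fun V => C V /\ ~ exists x, U x /\ V x)).

Definition S1 (A B : coll -> Prop) : Prop :=
  forall An : nat -> coll, (forall n, A (An n)) ->
    exists Bn : nat -> T -> Prop, (forall n, An n (Bn n)) /\
      B (fun V => exists n, V = Bn n).

End Topology.

Arguments T1 {T}. Arguments dense {T}. Arguments Gdelta {T}. Arguments compact {T}.
Arguments finite_coll {T}. Arguments GK {T}. Arguments GGamma {T}. Arguments GDGamma {T}.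
Arguments S1 {T}. Arguments is_topology {T}.

Definition sub_open {T : Type} (op : (T -> Prop) -> Prop) (D : T -> Prop)
  : ({x : T | D x} -> Prop) -> Prop :=
  fun V => exists U, op U /\ forall y : {x : T | D x}, V y <-> U (proj1_sig y).

(* Let (U_n) be a sequence of G_K-covers of X.  Call n good when every compact
   K included in D lies in some member of U_n that does not contain D; at a bad
   index some member of U_n containing a given compact K ⊆ D contains all of D.
   1. If some index g0 is good, the traces on D of the finite intersections
      V_0 ∩ ... ∩ V_(n+g0) (V_i ∈ U_i, V_i not containing D when i is good) form
      G_K-covers A_n of the subspace D.  S_1(G_K, G_Gamma) picks W_n ∈ A_n forming
      a gamma-cover of D; taking at step m the m-th factor of a W_(N m) that is
      new among W_0, ..., W_(m-1), we get for every good m a set g_m ∈ U_m not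
      containing D, such that each point of D lies in g_m for all large m.
   2. The final selection B_n is g_n at good indices and, at bad ones, a member
      of U_n containing D and different from B_0, ..., B_(n-1).  Every point of D
      is eventually in B_n, so by density every nonempty open set meets all but
      finitely many B_n; and the B_n are infinitely many distinct sets, either
      because infinitely many good g_n avoid points of D or because the bad B_n
      are eventually pairwise distinct. *)

From Stdlib Require Import List Arith Lia Classical ClassicalEpsilon.
Import ListNotations.

Definition same_set {T : Type} (V W : T -> Prop) : Prop := forall x, V x <-> W x.
Definition included {T : Type} (A B : T -> Prop) : Prop := forall x, A x -> B x.

Lemma choose_fun {A B : Type} (P : A -> B -> Prop) :
  (forall a, exists b, P a b) -> exists f : A -> B, forall a, P a (f a).
Proof.
  intros H. exists (fun a => proj1_sig (constructive_indefinite_description _ (H a))).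
  intros a. exact (proj2_sig (constructive_indefinite_description _ (H a))).
Qed.

Lemma list_choice {A B : Type} (Q : B -> Prop) (R : A -> B -> Prop) (xs : list A) :
  (forall a, In a xs -> exists b, Q b /\ R a b) ->
  exists l : list B, (forall b, In b l -> Q b) /\
    forall a, In a xs -> exists b, In b l /\ R a b.
Proof.
  induction xs as [|a xs IH]; intros H.
  - exists []. split; intros _ [].
  - destruct (H a (or_introl eq_refl)) as [b [Qb Rab]].
    destruct IH as [l [HlQ HlR]]; [intros a' Ha'; apply H; right; exact Ha'|].
    exists (b :: l). split.
    + intros b' [<-|Hb']; auto.
    + intros a' [<-|Ha'].
      * exists b. split; [left; reflexivity|exact Rab].
      * destruct (HlR a' Ha') as [b' [Hb' Rb']]. exists b'. split; [right; exact Hb'|exact Rb'].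
Qed.

Lemma eventually_all {A : Type} (P : nat -> A -> Prop) (ds : list A) :
  (forall d, In d ds -> exists M, forall m, M <= m -> P m d) ->
  exists M, forall m, M <= m -> forall d, In d ds -> P m d.
Proof.
  induction ds as [|d ds IH]; intros H.
  - exists 0. intros m _ d [].
  - destruct (H d (or_introl eq_refl)) as [M1 H1].
    destruct IH as [M2 H2]; [intros d' Hd'; apply H; right; exact Hd'|].
    exists (M1 + M2). intros m Hm d' [<-|Hd']; [apply H1; lia|apply H2; [lia|exact Hd']].
Qed.

Section Collections.
Variable T : Type.

Lemma separating_points (D : T -> Prop) (l : list (T -> Prop)) :
  exists ds : list T, (forall d, In d ds -> D d) /\
    forall W, In W l -> included D W \/ exists d, In d ds /\ ~ W d.
Proof.
  induction l as [|W l [ds [HdsD Hsep]]].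
  - exists []. split; intros _ [].
  - destruct (classic (included D W)) as [HDW|HDW].
    + exists ds. split; [exact HdsD|].
      intros W' [<-|HW']; [left; exact HDW|exact (Hsep W' HW')].
    + destruct (not_all_ex_not _ _ HDW) as [d Hd].
      destruct (imply_to_and _ _ Hd) as [Dd Wd].
      exists (d :: ds). split.
      * intros d' [<-|Hd']; auto.
      * intros W' [<-|HW'].
        -- right. exists d. split; [left; reflexivity|exact Wd].
        -- destruct (Hsep W' HW') as [HDW'|[z [Hz Wz]]]; [left; exact HDW'|].
           right. exists z. split; [right; exact Hz|exact Wz].
Qed.

Lemma distinct_not_finite (B : nat -> T -> Prop) (P : nat -> Prop) :
  (forall N, exists n, N <= n /\ P n) ->
  (forall n m, P n -> P m -> m < n -> ~ same_set (B n) (B m)) ->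
  ~ finite_coll (fun V => exists n, V = B n).
Proof.
  intros Hinf Hdist [l Hl].
  assert (Hmap : forall n, P n -> exists W, In W l /\ same_set (B n) W)
    by (intros n _; apply Hl; exists n; reflexivity).
  clear Hl. revert P Hinf Hdist Hmap.
  induction l as [|W l IH]; intros P Hinf Hdist Hmap.
  - destruct (Hinf 0) as [n [_ Pn]]. destruct (Hmap n Pn) as [W [[] _]].
  - destruct (classic (exists n0, P n0 /\ same_set (B n0) W)) as [[n0 [Pn0 E0]]|Hno].
    + (* beyond n0 the value W is no longer taken *)
      apply (IH (fun n => P n /\ n0 < n)).
      * intros N. destruct (Hinf (N + S n0)) as [n [Hn Pn]].
        exists n. split; [lia|split; [exact Pn|lia]].
      * intros n m [Pn _] [Pm _]. apply Hdist; assumption.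
      * intros n [Pn Hlt]. destruct (Hmap n Pn) as [W' [[<-|HW'] E]].
        -- exfalso. apply (Hdist n n0 Pn Pn0 Hlt).
           intros x. rewrite (E x), (E0 x). reflexivity.
        -- exists W'. split; assumption.
    + apply (IH P Hinf Hdist). intros n Pn. destruct (Hmap n Pn) as [W' [[<-|HW'] E]].
      * exfalso. apply Hno. exists n. split; assumption.
      * exists W'. split; assumption.
Qed.

Lemma fresh_index (W : nat -> T -> Prop) :
  ~ finite_coll (fun V => exists n, V = W n) ->
  forall m, exists n, m <= n /\ forall i, i < m -> ~ same_set (W n) (W i).
Proof.
  intros Hinf m. apply NNPP. intros Hno. apply Hinf.
  exists (map W (seq 0 m)). intros V [n ->].
  destruct (classic (exists i, i < m /\ same_set (W n) (W i))) as [[i [Hi E]]|Hnew].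
  - exists (W i). split; [apply in_map, in_seq; lia|exact E].
  - exfalso. apply Hno. exists n. split.
    + destruct (le_lt_dec m n) as [Hle|Hlt]; [exact Hle|].
      exfalso. apply Hnew. exists n. split; [exact Hlt|intros x; reflexivity].
    + intros i Hi E. apply Hnew. exists i. split; assumption.
Qed.

Lemma bounded_indices (W : nat -> T -> Prop) (P : (T -> Prop) -> Prop) :
  finite_coll (fun V => (exists n, V = W n) /\ P V) ->
  exists M, forall n, P (W n) -> exists i, i < M /\ same_set (W n) (W i).
Proof.
  intros [l Hl].
  assert (HM : exists M, forall V, In V l -> (exists i, same_set V (W i)) ->
                 exists i, i < M /\ same_set V (W i)).
  { clear Hl. induction l as [|V l [M HM]].
    - exists 0. intros V [].
    - destruct (classic (exists i, same_set V (W i))) as [[i Hi]|Hno].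
      + exists (M + S i). intros V' [<-|HV'] Hex.
        * exists i. split; [lia|exact Hi].
        * destruct (HM V' HV' Hex) as [j [Hj E]]. exists j. split; [lia|exact E].
      + exists M. intros V' [<-|HV'] Hex; [contradiction|exact (HM V' HV' Hex)]. }
  destruct HM as [M HM]. exists M. intros n Pn.
  destruct (Hl (W n) (conj (ex_intro _ n eq_refl) Pn)) as [V [HV E]].
  destruct (HM V HV) as [i [Hi Ei]].
  - exists n. intros x. symmetry. apply E.
  - exists i. split; [exact Hi|]. intros x. rewrite (E x). apply Ei.
Qed.

End Collections.

Section Topology.
Variable T : Type.
Variable op : (T -> Prop) -> Prop.

Lemma compact_union_finite (K : T -> Prop) (ys : list T) :
  compact op K -> compact op (fun x => K x \/ In x ys).
Proof.
  intros HK F HF Hcov.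
  destruct (HK F HF) as [lK [HlK HKcov]]; [intros x Kx; apply Hcov; left; exact Kx|].
  destruct (list_choice F (fun y U => U y) ys) as [ly [Hly Hycov]];
    [intros y Hy; apply Hcov; right; exact Hy|].
  exists (lK ++ ly). split.
  - intros U HU. destruct (in_app_or _ _ _ HU); auto.
  - intros x [Kx|Hx].
    + destruct (HKcov x Kx) as [U [HU Ux]].
      exists U. split; [apply in_or_app; left; exact HU|exact Ux].
    + destruct (Hycov x Hx) as [U [HU Ux]].
      exists U. split; [apply in_or_app; right; exact HU|exact Ux].
Qed.

Lemma compact_trace (D : T -> Prop) (K : {x | D x} -> Prop) :
  compact (sub_open op D) K -> compact op (fun x => exists p : D x, K (exist _ x p)).
Proof.
  intros HK F HF Hcov.
  pose (F' := fun V : {x | D x} -> Prop =>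
                exists U, F U /\ forall y, V y <-> U (proj1_sig y)).
  destruct (HK F') as [l' [Hl'F Hl'cov]].
  - intros V [U [FU HV]]. exists U. split; [exact (HF U FU)|exact HV].
  - intros [x p] Kx. destruct (Hcov x (ex_intro _ p Kx)) as [U [FU Ux]].
    exists (fun y => U (proj1_sig y)).
    split; [exists U; split; [exact FU|intros y; reflexivity]|exact Ux].
  - destruct (list_choice F (fun V U => forall y, V y -> U (proj1_sig y)) l')
      as [l [HlF Hlcov]].
    { intros V HV. destruct (Hl'F V HV) as [U [FU E]].
      exists U. split; [exact FU|intros y; apply E]. }
    exists l. split; [exact HlF|].
    intros x [p Kx]. destruct (Hl'cov _ Kx) as [V [HV Vx]].
    destruct (Hlcov V HV) as [U [HU HVU]]. exists U. split; [exact HU|exact (HVU _ Vx)].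
Qed.

Lemma Gdelta_ext (A B : T -> Prop) : same_set A B -> Gdelta op A -> Gdelta op B.
Proof.
  intros E [W [HW HA]]. exists W. split; [exact HW|].
  intros x. rewrite <- (E x). apply HA.
Qed.

Lemma Gdelta_and : is_topology op ->
  forall A B, Gdelta op A -> Gdelta op B -> Gdelta op (fun x => A x /\ B x).
Proof.
  intros [_ [Hinter _]] A B [W [HW HA]] [W' [HW' HB]].
  exists (fun n x => W n x /\ W' n x). split.
  - intros n. apply Hinter; auto.
  - intros x. rewrite (HA x), (HB x). firstorder.
Qed.

Lemma Gdelta_finite_inter : is_topology op ->
  forall (f : nat -> T -> Prop) k, (forall i, i <= k -> Gdelta op (f i)) ->
  Gdelta op (fun x => forall i, i <= k -> f i x).
Proof.
  intros Htop f k. induction k as [|k IH]; intros Hf.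
  - apply (Gdelta_ext (f 0)); [|apply Hf; lia].
    intros x. split; [intros Hx i Hi; replace i with 0 by lia; exact Hx|intros Hx; apply Hx; lia].
  - apply (Gdelta_ext (fun x => (forall i, i <= k -> f i x) /\ f (S k) x)).
    + intros x. split.
      * intros [Hx HSk] i Hi.
        destruct (Nat.eq_dec i (S k)) as [->|Hne]; [exact HSk|apply Hx; lia].
      * intros Hx. split; [intros i Hi; apply Hx; lia|apply Hx; lia].
    + apply Gdelta_and; [exact Htop|apply IH; intros i Hi; apply Hf; lia|apply Hf; lia].
Qed.

Lemma Gdelta_trace (D : T -> Prop) (A : T -> Prop) :
  Gdelta op A -> Gdelta (sub_open op D) (fun y : {x | D x} => A (proj1_sig y)).
Proof.
  intros [W [HW HA]]. exists (fun n y => W n (proj1_sig y)). split.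
  - intros n. exists (W n). split; [apply HW|intros y; reflexivity].
  - intros y. apply HA.
Qed.

End Topology.

Section Selection.
Variable T : Type.
Variable op : (T -> Prop) -> Prop.
Variable D : T -> Prop.
Variable Un : nat -> coll T.
Hypothesis HUn : forall n, GK op (Un n).

Definition good (n : nat) : Prop :=
  forall K, compact op K -> included K D ->
    exists V, Un n V /\ included K V /\ ~ included D V.

(* At a bad index some member of Un n contains D; as Un n covers every compact
   set but not the whole space, it can be chosen distinct from given sets. *)
Lemma bad_fresh_member n (L : list (T -> Prop)) : ~ good n ->
  exists V, Un n V /\ included D V /\ forall W, In W L -> ~ same_set V W.
Proof.
  intros Hbad.
  assert (HK : exists K, compact op K /\ included K D /\
                 forall V, Un n V -> included K V -> included D V).
  { apply NNPP. intros Hno. apply Hbad. intros K HK HKD. apply NNPP. intros Hnone.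
    apply Hno. exists K. split; [exact HK|split; [exact HKD|]].
    intros V HV HKV. apply NNPP. intros HDV. apply Hnone. exists V. auto. }
  destruct HK as [K [HK [HKD HforceD]]].
  destruct (separating_points T (fun _ => True) L) as [ys [_ Hsep]].
  destruct (HUn n) as [_ [Hproper Hcov]].
  destruct (Hcov _ (compact_union_finite T op K ys HK)) as [V [HV HKV]].
  exists V. split; [exact HV|split].
  - apply (HforceD V HV). intros x Kx. apply HKV. left. exact Kx.
  - intros W HW E. destruct (Hsep W HW) as [Hall|[y [Hy Wy]]].
    + apply Hproper. exists V. split; [exact HV|]. intros x. apply (E x), Hall. exact I.
    + apply Wy, (E y), HKV. right. exact Hy.
Qed.

Definition good_selection (gp : nat -> T -> Prop) : Prop :=
  (forall n, good n -> Un n (gp n) /\ ~ included D (gp n)) /\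
  (forall d, D d -> exists M, forall m, M <= m -> good m -> gp m d).

Section TraceCover.
Hypothesis Htop : is_topology op.
Variable g0 : nat.
Hypothesis Hg0 : good g0.

Definition trace_cover (n : nat) : coll {x | D x} := fun W =>
  exists f : nat -> T -> Prop,
    (forall i, i <= n + g0 -> Un i (f i) /\ (good i -> ~ included D (f i))) /\
    forall y, W y <-> forall i, i <= n + g0 -> f i (proj1_sig y).

Lemma trace_cover_GK n : GK (sub_open op D) (trace_cover n).
Proof.
  split; [|split].
  - intros W [f [Hf HW]].
    apply (Gdelta_ext _ (sub_open op D) (fun y => forall i, i <= n + g0 -> f i (proj1_sig y)));
      [intros y; symmetry; apply HW|].
    apply (Gdelta_trace T op D (fun x => forall i, i <= n + g0 -> f i x)).
    apply (Gdelta_finite_inter T op Htop). intros i Hi. apply (proj1 (HUn i)), (Hf i Hi).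
  - (* the factor of index g0 misses a point of D *)
    intros [W [[f [Hf HW]] Hall]].
    apply (proj2 (Hf g0 ltac:(lia)) Hg0). intros x Dx.
    apply (proj1 (HW (exist _ x Dx)) (Hall _) g0). lia.
  - intros K HK.
    pose (K' := fun x => exists p : D x, K (exist _ x p)).
    assert (HK' : compact op K') by exact (compact_trace T op D K HK).
    assert (HK'D : included K' D) by (intros x [p _]; exact p).
    destruct (choose_fun (fun i V => Un i V /\ included K' V /\ (good i -> ~ included D V)))
      as [f Hf].
    { intros i. destruct (classic (good i)) as [Hg|Hb].
      - destruct (Hg K' HK' HK'D) as [V [HV [HKV HDV]]].
        exists V. split; [exact HV|split; [exact HKV|intros _; exact HDV]].
      - destruct (proj2 (proj2 (HUn i)) K' HK') as [V [HV HKV]].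
        exists V. split; [exact HV|split; [exact HKV|contradiction]]. }
    exists (fun y => forall i, i <= n + g0 -> f i (proj1_sig y)). split.
    + exists f. split; [|intros y; reflexivity].
      intros i _. destruct (Hf i) as [HU [_ HD]]. split; assumption.
    + intros [x p] Kx i _. apply (Hf i). exists p. exact Kx.
Qed.

Hypothesis HS1 : S1 (GK (sub_open op D)) (GGamma (sub_open op D)).

(* Step 1: diagonalize a gamma-cover of D selected from the trace covers. *)
Lemma diagonal_selection : exists gp, good_selection gp.
Proof.
  destruct (HS1 trace_cover trace_cover_GK) as [Wn [HWn [_ [HWinf HWgamma]]]].
  destruct (choose_fun (fun n f =>
      (forall i, i <= n + g0 -> Un i (f i) /\ (good i -> ~ included D (f i))) /\
      forall y, Wn n y <-> forall i, i <= n + g0 -> f i (proj1_sig y)) HWn) as [F HF].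
  destruct (choose_fun _ (fresh_index _ Wn HWinf)) as [N HN].
  exists (fun m => F (N m) m). split.
  - intros m Hg. destruct (HN m) as [HmN _].
    destruct (proj1 (HF (N m)) m ltac:(lia)) as [HU HD]. split; [exact HU|exact (HD Hg)].
  - intros d Dd. pose (y := exist D d Dd).
    (* only finitely many W_n miss y, and they already occur below some M *)
    assert (Hfin : finite_coll (fun V => (exists n, V = Wn n) /\ ~ V y)).
    { apply NNPP. intros Hnf.
      destruct (HWgamma _ (fun V H => proj1 H) Hnf y) as [V [[_ HVy] Vy]]. exact (HVy Vy). }
    destruct (bounded_indices _ Wn (fun V => ~ V y) Hfin) as [M HM].
    exists M. intros m Hm _. destruct (HN m) as [HmN Hfresh].
    assert (Hy : Wn (N m) y).
    { apply NNPP. intros Hny. destruct (HM (N m) Hny) as [i [Hi E]].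
      exact (Hfresh i ltac:(lia) E). }
    exact (proj1 (proj2 (HF (N m)) y) Hy m ltac:(lia)).
Qed.

End TraceCover.

(* If no index is good, any choice works vacuously for step 1. *)
Lemma good_selection_exists : is_topology op ->
  S1 (GK (sub_open op D)) (GGamma (sub_open op D)) -> exists gp, good_selection gp.
Proof.
  intros Htop HS1. destruct (classic (exists g0, good g0)) as [[g0 Hg0]|Hnone].
  - exact (diagonal_selection Htop g0 Hg0 HS1).
  - exists (fun _ _ => True). split.
    + intros n Hg. exfalso. apply Hnone. exists n. exact Hg.
    + intros d _. exists 0. intros m _ _. exact I.
Qed.

Section Construction.
Variable gp : nat -> T -> Prop.
Hypothesis Hgp : good_selection gp.

Lemma next_member_exists n (L : list (T -> Prop)) : exists V, Un n V /\
  (good n -> V = gp n) /\ (~ good n -> included D V /\ forall W, In W L -> ~ same_set V W).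
Proof.
  destruct (classic (good n)) as [Hg|Hb].
  - exists (gp n). split; [exact (proj1 (proj1 Hgp n Hg))|].
    split; [reflexivity|contradiction].
  - destruct (bad_fresh_member n L Hb) as [V [HV [HDV Hnew]]].
    exists V. split; [exact HV|split; [contradiction|split; assumption]].
Qed.

Definition next_member n L : T -> Prop :=
  proj1_sig (constructive_indefinite_description _ (next_member_exists n L)).

Fixpoint history (n : nat) : list (T -> Prop) :=
  match n with 0 => [] | S k => next_member k (history k) :: history k end.

Definition B (n : nat) : T -> Prop := next_member n (history n).

Lemma B_spec n : Un n (B n) /\ (good n -> B n = gp n) /\
  (~ good n -> included D (B n) /\ forall W, In W (history n) -> ~ same_set (B n) W).
Proof. exact (proj2_sig (constructive_indefinite_description _ (next_member_exists n (history n)))). Qed.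

Lemma history_contains i n : i < n -> In (B i) (history n).
Proof.
  induction n as [|n IH]; intros Hi; [lia|].
  destruct (Nat.eq_dec i n) as [->|Hne]; [left; reflexivity|right; apply IH; lia].
Qed.

Lemma B_bad n : ~ good n ->
  included D (B n) /\ forall i, i < n -> ~ same_set (B n) (B i).
Proof.
  intros Hb. destruct (proj2 (proj2 (B_spec n)) Hb) as [HDB Hnew].
  split; [exact HDB|]. intros i Hi. apply Hnew, history_contains, Hi.
Qed.

Lemma B_eventually d : D d -> exists M, forall m, M <= m -> B m d.
Proof.
  intros Dd. destruct (proj2 Hgp d Dd) as [M HM]. exists M. intros m Hm.
  destruct (classic (good m)) as [Hg|Hb].
  - rewrite (proj1 (proj2 (B_spec m)) Hg). exact (HM m Hm Hg).
  - exact (proj1 (B_bad m Hb) d Dd).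
Qed.

Lemma B_infinite : ~ finite_coll (fun V => exists n, V = B n).
Proof.
  destruct (classic (forall N, exists n, N <= n /\ good n)) as [Hgood|Hgood].
  - (* a good B m beyond M contains the separating points yet misses part of D *)
    intros [l Hl].
    destruct (separating_points T D l) as [ds [HdsD Hsep]].
    destruct (eventually_all (fun m d => B m d) ds) as [M HM];
      [intros d Hd; exact (B_eventually d (HdsD d Hd))|].
    destruct (Hgood M) as [m [Hm Hg]].
    destruct (Hl (B m) (ex_intro _ m eq_refl)) as [W [HW E]].
    destruct (Hsep W HW) as [HDW|[d [Hd Wd]]].
    + apply (proj2 (proj1 Hgp m Hg)). rewrite <- (proj1 (proj2 (B_spec m)) Hg).
      intros x Dx. apply (E x), HDW, Dx.
    + apply Wd, (E d), (HM m Hm d Hd).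
  - (* eventually all indices are bad, and bad choices are pairwise distinct *)
    destruct (not_all_ex_not _ _ Hgood) as [N HN].
    apply (distinct_not_finite T B (fun n => N <= n)).
    + intros N'. exists (N + N'). split; lia.
    + intros n m Hn _ Hmn. apply B_bad; [|exact Hmn].
      intros Hg. apply HN. exists n. split; assumption.
Qed.

Lemma B_DGamma : dense op D -> GDGamma op (fun V => exists n, V = B n).
Proof.
  intros Hdense. split; [|split; [exact B_infinite|]].
  - intros V [n ->]. exact (proj1 (HUn n) _ (proj1 (B_spec n))).
  - (* U meets D in a point that lies in every B n with n >= M *)
    intros U HU HUne. destruct (Hdense U HU HUne) as [d [Ud Dd]].
    destruct (B_eventually d Dd) as [M HM].
    exists (map B (seq 0 M)). intros V [[n ->] Hmiss].
    exists (B n). split; [|intros x; reflexivity].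
    apply in_map, in_seq. destruct (le_lt_dec M n) as [Hle|Hlt]; [|lia].
    exfalso. apply Hmiss. exists d. split; [exact Ud|exact (HM n Hle)].
Qed.

End Construction.
End Selection.

Theorem lemma5p14 (T : Type) (op : (T -> Prop) -> Prop) (D : T -> Prop) :
  is_topology op -> T1 op -> infinite_type T ->
  dense op D ->
  S1 (GK (sub_open op D)) (GGamma (sub_open op D)) ->
  S1 (GK op) (GDGamma op).
Proof.
  intros Htop _ _ Hdense HS1 Un HUn.
  destruct (good_selection_exists T op D Un HUn Htop HS1) as [gp Hgp].
  exists (B T op D Un HUn gp Hgp). split.
  - intros n. exact (proj1 (B_spec T op D Un HUn gp Hgp n)).
  - exact (B_DGamma T op D Un HUn gp Hgp Hdense).
Qed.
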